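(* Let $(X, A, Y(0), Y(1))$ be a random vector with $X \in \mathbb{R}^d$ covariates, $A \in \{0,1\}$ a binary treatment and $Y(0), Y(1) \in \mathbb{R}$ potential outcomes. Let $f:\mathbb{R}^d \to [0,1]$ be a weight function and let $V \sim \mathrm{Unif}(0,1)$ be drawn independently of $(X, A, Y(0), Y(1))$. Define the pair of flip interventions \[ D_f(0) = A\,\mathbf{1}\{V > f(X)\}, \qquad D_f(1) = A + (1-A)\,\mathbf{1}\{V \le f(X)\}, \] and the interventional flip effect \[ \psi_f = \frac{\mathbb{E}\big[ Y\{D_f(1)\} - Y\{D_f(0)\}\big]}{\mathbb{E}\{D_f(1) - D_f(0)\}}. \] Then \[ \psi_f = \mathbb{E}\left[ \frac{\mathbb{E}\{Y(1) - Y(0) \mid X\}\, f(X)}{\mathbb{E}\{f(X)\}} \right]. \]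
   Context: For a (possibly random) treatment decision $D \in \{0,1\}$, $Y(D)$ denotes the potential outcome under decision $D$, i.e. $Y(D) = D\,Y(1) + (1-D)\,Y(0)$. The observed outcome is $Y = Y(A)$ (consistency). The right-hand side is a weighted average treatment effect with weight $f$; the ratio $\psi_f$ is assumed well defined (i.e. $\mathbb{E}\{f(X)\}>0$ and the relevant expectations exist). *)

From HB Require Import structures.
From mathcomp Require Import all_boot all_order all_algebra.
From mathcomp Require Import all_classical all_reals all_analysis.
Set Implicit Arguments. Unset Strict Implicit. Unset Printing Implicit Defensive.
Import Order.TTheory GRing.Theory Num.Theory.
Import numFieldNormedType.Exports.
Local Open Scope classical_set_scope.
Local Open Scope ring_scope.

Definition Rvec (R : realType) (d : nat) :=
  g_sigma_algebraType (@open 'rV[R]_d).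

Definition ind (R : realType) (b : bool) : R := if b then 1 else 0.

Definition YD (R : realType) (D y0 y1 : R) : R := D * y1 + (1 - D) * y0.

Definition Df0 (R : realType) (a v fx : R) : R := a * @ind R (fx < v).
Definition Df1 (R : realType) (a v fx : R) : R := a + (1 - a) * @ind R (v <= fx).

Definition is_unif01 d (T : measurableType d) (R : realType)
  (P : probability T R) (V : T -> R) :=
  forall t : R, 0 <= t <= 1 -> P [set w | V w <= t] = t%:E.

(* V is independent of the random vector (X, A, Y0, Y1): the joint law
   factorizes on measurable rectangles (which generate the product
   sigma-algebra and form a pi-system). *)
Definition indep_of d dx (T : measurableType d) (X_ : measurableType dx)
  (R : realType) (P : probability T R)
  (V : T -> R) (X : T -> X_) (A Y0 Y1 : T -> R) :=
  forall (Bx : set X_) (Ba B0 B1 Bv : set R),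
    measurable Bx -> measurable Ba -> measurable B0 -> measurable B1 ->
    measurable Bv ->
    P (X @^-1` Bx `&` A @^-1` Ba `&` Y0 @^-1` B0 `&` Y1 @^-1` B1
         `&` V @^-1` Bv)
    = (P (X @^-1` Bx `&` A @^-1` Ba `&` Y0 @^-1` B0 `&` Y1 @^-1` B1)
       * P (V @^-1` Bv))%E.

(* g is (a version of) the conditional expectation E{Z | X}, viewed as a
   measurable function of X: E[g(X) 1{X in B}] = E[Z 1{X in B}] for all
   measurable B. *)
Definition is_cond_exp d dx (T : measurableType d) (X_ : measurableType dx)
  (R : realType) (P : probability T R) (Z : T -> R) (X : T -> X_)
  (g : X_ -> R) :=
  [/\ measurable_fun setT g,
      P.-integrable setT (EFin \o (g \o X)) &
      forall B : set X_, measurable B ->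
        (\int[P]_(w in X @^-1` B) (g (X w))%:E
         = \int[P]_(w in X @^-1` B) (Z w)%:E)%E].

From HB Require Import structures.
From mathcomp Require Import all_boot all_order all_algebra.
From mathcomp Require Import all_classical all_reals all_analysis.
From mathcomp Require Import ring measurable_realfun.
Import Order.TTheory GRing.Theory Num.Theory.
Import numFieldNormedType.Exports.
Local Open Scope classical_set_scope.
Local Open Scope ring_scope.
Set Implicit Arguments. Unset Strict Implicit.

(** Since A is 0/1-valued, Y{D_f(1)} - Y{D_f(0)} = 1{V <= f(X)} (Y(1) - Y(0))
    and D_f(1) - D_f(0) = 1{V <= f(X)}.  Independence of V from
    (X, A, Y(0), Y(1)) extends from measurable rectangles to the generated
    sigma-algebra by uniqueness of measures, so for every integrable h that is
    measurable for it, E[1{V <= f(X)} h] is an integral against a product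
    measure and Fubini applies in both orders.  Integrating V out first gives
    E[f(X) h], V being uniform; integrating the other factor first gives
    the integral over v of E[h; f(X) >= v], which sees h only through its
    integrals over events of sigma(X).  Hence h = Y(1) - Y(0) may be replaced by
    its conditional expectation g(X), and the ratio is
    E[f(X) g(X)] / E[f(X)]. *)

Lemma measurable_fun_ind_le (R : realType) d (T : measurableType d)
    (g1 g2 : T -> R) :
  measurable_fun setT g1 -> measurable_fun setT g2 ->
  measurable_fun setT (fun z => ind R (g1 z <= g2 z)).
Proof.
by move=> mg1 mg2; apply: measurable_fun_ifT => //; exact: measurable_fun_ler.
Qed.

Lemma normr_ind_le1 (R : realType) (b : bool) : `|ind R b| <= 1.
Proof. by case: b; rewrite /ind ?normr1 ?normr0. Qed.

Lemma measurable_superlevel (R : realType) d (T : measurableType d)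
    (k : T -> R) (v : R) :
  measurable_fun setT k -> measurable [set x | v <= k x].
Proof.
move=> mk.
have -> : [set x | v <= k x] = k @^-1` `[v, +oo[ by rewrite set_itvcy.
by rewrite -[S in measurable S]setTI; apply: mk => //; exact: measurable_itv.
Qed.

Lemma integrable_mul_norm_le1 (R : realType) d (T : measurableType d)
    (mu : measure T R) (k h : T -> R) :
  measurable_fun setT k -> (forall x, `|k x| <= 1) ->
  mu.-integrable setT (EFin \o h) ->
  mu.-integrable setT (EFin \o (fun x => k x * h x)).
Proof.
move=> mk k1 ih; apply: le_integrable (ih) => //.
  apply/measurable_EFinP; apply: measurable_funM => //.
  by apply/measurable_EFinP; exact: measurable_int ih.
by move=> x _ /=; rewrite lee_fin normrM ler_piMl.
Qed.

Lemma YD_Df1_sub_Df0 (R : realType) (a v c y0 y1 : R) : a = 0 \/ a = 1 ->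
  YD (Df1 a v c) y0 y1 - YD (Df0 a v c) y0 y1 = ind R (v <= c) * (y1 - y0).
Proof. by case=> ->; rewrite /YD /Df1 /Df0 /ind; case: leP => _; ring. Qed.

Lemma Df1_sub_Df0 (R : realType) (a v c : R) : a = 0 \/ a = 1 ->
  Df1 a v c - Df0 a v c = ind R (v <= c).
Proof. by case=> ->; rewrite /Df1 /Df0 /ind; case: leP => _; ring. Qed.

Section randomized_threshold.
Context (R : realType) (d : measure_display) (T : measurableType d)
  (P : probability T R) (C : set (set T)) (V : T -> R).
Hypotheses (C_measurable : C `<=` measurable) (C_setI : setI_closed C)
  (C_setT : C setT) (mV : measurable_fun setT V)
  (indepC : forall G B, C G -> measurable B ->
     P (G `&` V @^-1` B) = (P G * P (V @^-1` B))%E).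

Local Notation TC := (g_sigma_algebraType C).

Definition to_g_sigma (w : T) : TC := w.

Lemma measurable_to_g_sigma : measurable_fun setT to_g_sigma.
Proof.
move=> _ G mG; rewrite setTI preimage_id.
exact: (smallest_sub (@sigma_algebra_measurable _ T) C_measurable mG).
Qed.

HB.instance Definition _ :=
  isMeasurableFun.Build _ _ _ _ to_g_sigma measurable_to_g_sigma.
HB.instance Definition _ := isMeasurableFun.Build _ _ _ _ V mV.

Lemma measurable_fun_of_g_sigma d' (U : measurableType d') (h : TC -> U) :
  measurable_fun setT h -> measurable_fun setT (h : T -> U).
Proof. by move=> mh; exact: measurableT_comp mh measurable_to_g_sigma. Qed.

Lemma indep_g_sigma G B : <<s C>> G -> measurable B ->
  P (G `&` V @^-1` B) = (P G * P (V @^-1` B))%E.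
Proof.
(* Both sides are finite measures in G that agree on the pi-system C. *)
move=> mG mB; have mVB := measurable_funPTI V mB.
have PVB_fin : P (V @^-1` B) \is a fin_num by rewrite fin_num_measure.
pose restricted := pushforward (mrestr P mVB) to_g_sigma.
pose scaled := mscale (NngNum (fine_ge0 (measure_ge0 P (V @^-1` B))))
  (distribution P to_g_sigma).
have -> : (P G * P (V @^-1` B))%E = scaled G.
  by rewrite /scaled /mscale /= fineK // muleC.
change (restricted G = scaled G).
apply: (@measure_unique _ _ TC C (fun=> setT) erefl C_setI (fun=> C_setT) _
  restricted scaled) => //.
- by rewrite bigcup_const.
- move=> G' CG'; rewrite /restricted /scaled /= /pushforward /mrestr /mscale /=.
  by rewrite indepC // fineK // muleC.
- move=> _; rewrite /restricted /= /pushforward /mrestr /= preimage_setT setTI.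
  by rewrite (le_lt_trans (probability_le1 _ _)) ?ltry.
Qed.

Definition with_V (w : T) : TC * R := (to_g_sigma w, V w).

Lemma measurable_with_V : measurable_fun setT with_V.
Proof. exact: measurable_fun_pair measurable_to_g_sigma mV. Qed.

HB.instance Definition _ :=
  isMeasurableFun.Build _ _ _ _ with_V measurable_with_V.

Local Notation PC := (distribution P to_g_sigma).
Local Notation PV := (distribution P V).

Lemma product_distribution_with_V S : measurable S ->
  (PC \x PV)%E S = distribution P with_V S.
Proof. by apply: product_measure_unique => G B mG mB; exact: indep_g_sigma. Qed.

Variable phi : TC -> R.
Hypotheses (mphi : measurable_fun setT phi) (phi01 : forall w, 0 <= phi w <= 1)
  (V_unif : is_unif01 P V).

Let threshold (h : TC -> R) (z : TC * R) : \bar R :=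
  (ind R (z.2 <= phi z.1) * h z.1)%:E.

Lemma measurable_threshold h :
  measurable_fun setT h -> measurable_fun setT (threshold h).
Proof.
move=> mh; apply/measurable_EFinP; apply: measurable_funM.
  apply: measurable_fun_ind_le; first exact: measurable_snd.
  exact: measurableT_comp mphi measurable_fst.
exact: measurableT_comp mh measurable_fst.
Qed.

Lemma integral_ind_le_uniform c a : 0 <= c <= 1 ->
  (\int[PV]_v (ind R (v <= c) * a)%:E = (c * a)%:E)%E.
Proof.
move=> c01.
have mS : measurable [set v : R | v <= c].
  by rewrite -set_itvNyc; exact: measurable_itv.
transitivity (\int[PV]_v (a%:E * (\1_[set v : R | v <= c] v)%:E))%E.
  apply: eq_integral => v _; rewrite /ind indicE -EFinM; congr EFin.
  case: ifPn => vc; first by rewrite mem_set // mul1r mulr1.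
  by rewrite memNset ?mul0r ?mulr0 //; apply/negP.
rewrite integralZl //; last exact: integrable_indic.
rewrite integral_indic // setIT.
transitivity (a%:E * P [set w | (V w <= c)%R])%E; first by [].
by rewrite V_unif // -EFinM mulrC.
Qed.

Section threshold_integrand.
Variable h : TC -> R.
Hypotheses (mh : measurable_fun setT h) (ih : P.-integrable setT (EFin \o h)).

Lemma integrable_threshold_with_V :
  P.-integrable setT (threshold h \o with_V).
Proof.
apply: integrable_mul_norm_le1 => //.
- exact: measurable_fun_ind_le mV (measurable_fun_of_g_sigma mphi).
- by move=> w; exact: normr_ind_le1.
Qed.

Lemma integrable_threshold_prod : (PC \x PV)%E.-integrable setT (threshold h).
Proof.
apply/integrableP; split; first exact: measurable_threshold.
rewrite (eq_measure_integral (distribution P with_V)); last first.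
  by move=> S mS _; exact: product_distribution_with_V.
rewrite ge0_integral_distribution //; last first.
  exact: measurableT_comp (measurable_threshold mh).
by have /integrableP[] := integrable_threshold_with_V.
Qed.

Lemma integral_threshold_prod :
  (\int[P]_w (ind R (V w <= phi w) * h w)%:E
   = \int[PC \x PV]_z threshold h z)%E.
Proof.
rewrite (eq_measure_integral (distribution P with_V)); last first.
  by move=> S mS _; exact: product_distribution_with_V.
rewrite integral_distribution //; first exact: measurable_threshold.
exact: integrable_threshold_with_V.
Qed.

Lemma integral_randomized_threshold :
  (\int[P]_w (ind R (V w <= phi w) * h w)%:E = \int[P]_w (phi w * h w)%:E)%E.
Proof.
rewrite integral_threshold_prod -integral12_prod_meas1; last first.
  exact: integrable_threshold_prod.
transitivity (\int[PC]_w (phi w * h w)%:E)%E.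
  apply: eq_integral => w _.
  by rewrite /fubini_F /threshold /= integral_ind_le_uniform.
rewrite integral_distribution //.
  by apply/measurable_EFinP; exact: measurable_funM.
apply: integrable_mul_norm_le1 => //; first exact: measurable_fun_of_g_sigma.
by move=> w; have /andP[phi0 phi1] := phi01 w; rewrite ger0_norm.
Qed.

Lemma integral_randomized_threshold_levels :
  (\int[P]_w (ind R (V w <= phi w) * h w)%:E
   = \int[PV]_v \int[P]_(w in [set w : T | (v <= phi w)%R]) (h w)%:E)%E.
Proof.
rewrite integral_threshold_prod -integral21_prod_meas1; last first.
  exact: integrable_threshold_prod.
apply: eq_integral => v _; rewrite /fubini_G /threshold /=.
have mlevel : measurable_fun setT (fun w : TC => ind R (v <= phi w)).
  exact: measurable_fun_ind_le.
have mlevel_h :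
    measurable_fun setT (fun w : TC => (ind R (v <= phi w) * h w)%:E).
  by apply/measurable_EFinP; exact: measurable_funM.
have ilevel : P.-integrable setT (EFin \o (fun w => ind R (v <= phi w) * h w)).
  apply: integrable_mul_norm_le1 => //; first exact: measurable_fun_of_g_sigma.
  by move=> w; exact: normr_ind_le1.
rewrite integral_distribution //.
rewrite [RHS]integral_mkcond; apply: eq_integral => w _; rewrite /patch /ind /=.
case: ifPn => vphi; first by rewrite mem_set // mul1r.
by rewrite memNset ?mul0r //; exact/negP.
Qed.

End threshold_integrand.

Lemma integral_randomized_threshold_eq (h1 h2 : TC -> R) :
  measurable_fun setT h1 -> P.-integrable setT (EFin \o h1) ->
  measurable_fun setT h2 -> P.-integrable setT (EFin \o h2) ->
  (forall v, \int[P]_(w in [set w : T | (v <= phi w)%R]) (h1 w)%:E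
           = \int[P]_(w in [set w : T | (v <= phi w)%R]) (h2 w)%:E)%E ->
  (\int[P]_w (ind R (V w <= phi w) * h1 w)%:E
   = \int[P]_w (phi w * h2 w)%:E)%E.
Proof.
move=> mh1 ih1 mh2 ih2 levels.
rewrite (integral_randomized_threshold_levels mh1 ih1).
under eq_integral do rewrite levels.
rewrite -(integral_randomized_threshold_levels mh2 ih2).
exact: integral_randomized_threshold.
Qed.
End randomized_threshold.

Section joint_rectangles.
Context (R : realType) (dT : measure_display) (T : measurableType dT) (d : nat)
  (X : T -> Rvec R d) (A Y0 Y1 : T -> R).

Definition joint_rectangles : set (set T) := [set G | exists Bx Ba B0 B1,
  [/\ measurable Bx, measurable Ba, measurable B0, measurable B1 &
   G = X @^-1` Bx `&` A @^-1` Ba `&` Y0 @^-1` B0 `&` Y1 @^-1` B1]].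

Local Notation TXAY := (g_sigma_algebraType joint_rectangles).

Lemma joint_rectangles_setI : setI_closed joint_rectangles.
Proof.
move=> _ _ [Bx [Ba [B0 [B1 [mBx mBa mB0 mB1 ->]]]]]
  [Bx' [Ba' [B0' [B1' [mBx' mBa' mB0' mB1' ->]]]]].
exists (Bx `&` Bx'), (Ba `&` Ba'), (B0 `&` B0'), (B1 `&` B1').
split; try exact: measurableI.
by apply/seteqP; split=> w /=; tauto.
Qed.

Lemma joint_rectangles_setT : joint_rectangles setT.
Proof. by exists setT, setT, setT, setT; rewrite !preimage_setT !setIT. Qed.

Lemma measurable_joint_X : measurable_fun setT (X : TXAY -> Rvec R d).
Proof.
move=> _ B mB; rewrite setTI; apply: sub_sigma_algebra.
by exists B, setT, setT, setT; rewrite !preimage_setT !setIT.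
Qed.

Lemma measurable_joint_Y0 : measurable_fun setT (Y0 : TXAY -> R).
Proof.
move=> _ B mB; rewrite setTI; apply: sub_sigma_algebra.
by exists setT, setT, B, setT; rewrite !preimage_setT setIT !setTI.
Qed.

Lemma measurable_joint_Y1 : measurable_fun setT (Y1 : TXAY -> R).
Proof.
move=> _ B mB; rewrite setTI; apply: sub_sigma_algebra.
by exists setT, setT, setT, B; rewrite !preimage_setT !setTI.
Qed.

Hypotheses (mX : measurable_fun setT X) (mA : measurable_fun setT A)
  (mY0 : measurable_fun setT Y0) (mY1 : measurable_fun setT Y1).

Lemma joint_rectangles_measurable : joint_rectangles `<=` measurable.
Proof.
move=> _ [Bx [Ba [B0 [B1 [mBx mBa mB0 mB1 ->]]]]].
by repeat apply: measurableI; rewrite -[S in measurable S]setTI;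
  first [apply: mX | apply: mA | apply: mY0 | apply: mY1].
Qed.

End joint_rectangles.

Section flip_effect.
Context (R : realType) (dT : measure_display) (T : measurableType dT)
  (P : probability T R) (d : nat) (X : T -> Rvec R d) (A Y0 Y1 V : T -> R)
  (f g : Rvec R d -> R).
Hypotheses (mX : measurable_fun setT X) (mA : measurable_fun setT A)
  (mY0 : measurable_fun setT Y0) (mY1 : measurable_fun setT Y1)
  (mV : measurable_fun setT V) (mf : measurable_fun setT f)
  (A01 : forall w, A w = 0 \/ A w = 1) (f01 : forall x, 0 <= f x <= 1)
  (iY0 : P.-integrable setT (EFin \o Y0))
  (iY1 : P.-integrable setT (EFin \o Y1))
  (V_unif : is_unif01 P V) (indep : indep_of P V X A Y0 Y1).

Local Notation C := (joint_rectangles X A Y0 Y1).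

Let indepC G B : C G -> measurable B ->
  P (G `&` V @^-1` B) = (P G * P (V @^-1` B))%E.
Proof. by move=> [Bx [Ba [B0 [B1 [mBx mBa mB0 mB1 ->]]]]] mB; exact: indep. Qed.

Let mX' : measurable_fun setT (X : g_sigma_algebraType C -> _).
Proof. exact: measurable_joint_X. Qed.

Let mY0' : measurable_fun setT (Y0 : g_sigma_algebraType C -> R).
Proof. exact: measurable_joint_Y0. Qed.

Let mY1' : measurable_fun setT (Y1 : g_sigma_algebraType C -> R).
Proof. exact: measurable_joint_Y1. Qed.

Let mfX : measurable_fun setT (f \o X : g_sigma_algebraType C -> R).
Proof. exact: measurableT_comp mf mX'. Qed.

Let fX01 w : 0 <= f (X w) <= 1. Proof. exact: f01. Qed.

Let Cm := joint_rectangles_measurable mX mA mY0 mY1.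
Let CI := @joint_rectangles_setI _ _ _ _ X A Y0 Y1.
Let CT := @joint_rectangles_setT _ _ _ _ X A Y0 Y1.

Lemma flip_numerator : is_cond_exp P (fun w => Y1 w - Y0 w) X g ->
  (\int[P]_w (YD (Df1 (A w) (V w) (f (X w))) (Y0 w) (Y1 w)
            - YD (Df0 (A w) (V w) (f (X w))) (Y0 w) (Y1 w))%:E
   = \int[P]_w (f (X w) * g (X w))%:E)%E.
Proof.
move=> [mg ig condg].
under eq_integral => w _ do rewrite YD_Df1_sub_Df0 //.
apply: (integral_randomized_threshold_eq Cm CI CT mV indepC mfX fX01 V_unif).
- exact: measurable_funB.
- exact: (integrableB measurableT iY1 iY0).
- exact: measurableT_comp mg mX'.
- exact: ig.
- move=> v; symmetry; apply: (condg [set x | v <= f x]).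
  exact: measurable_superlevel.
Qed.

Lemma flip_denominator :
  (\int[P]_w (Df1 (A w) (V w) (f (X w)) - Df0 (A w) (V w) (f (X w)))%:E
   = \int[P]_w (f (X w))%:E)%E.
Proof.
under eq_integral => w _ do rewrite Df1_sub_Df0 // -[ind _ _]mulr1.
rewrite (integral_randomized_threshold Cm CI CT mV indepC mfX fX01 V_unif).
- by under eq_integral do rewrite mulr1.
- exact: measurable_cst.
- exact: finite_measure_integrable_cst.
Qed.

End flip_effect.

Theorem proposition1 (R : realType) (dT : measure_display)
  (T : measurableType dT) (P : probability T R) (d : nat)
  (X : T -> Rvec R d) (A Y0 Y1 V : T -> R) (f : Rvec R d -> R)
  (g : Rvec R d -> R) :
  measurable_fun setT X -> measurable_fun setT A ->
  measurable_fun setT Y0 -> measurable_fun setT Y1 ->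
  measurable_fun setT V -> measurable_fun setT f ->
  (forall w, A w = 0 \/ A w = 1) ->
  (forall x, 0 <= f x <= 1) ->
  P.-integrable setT (EFin \o Y0) -> P.-integrable setT (EFin \o Y1) ->
  is_unif01 P V ->
  indep_of P V X A Y0 Y1 ->
  0 < Rintegral P setT (f \o X) ->
  is_cond_exp P (fun w => Y1 w - Y0 w) X g ->
  Rintegral P setT
    (fun w => YD (Df1 (A w) (V w) (f (X w))) (Y0 w) (Y1 w)
            - YD (Df0 (A w) (V w) (f (X w))) (Y0 w) (Y1 w))
  / Rintegral P setT
      (fun w => Df1 (A w) (V w) (f (X w)) - Df0 (A w) (V w) (f (X w)))
  = Rintegral P setT
      (fun w => g (X w) * f (X w) / Rintegral P setT (f \o X)).
Proof.
move=> mX mA mY0 mY1 mV mf A01 f01 iY0 iY1 unif indep _ cond.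
have [mg ig _] := cond.
under [in RHS]eq_Rintegral do rewrite [g _ * _]mulrC.
rewrite RintegralZr //; last first.
  apply: integrable_mul_norm_le1 => //; first exact: measurableT_comp.
  by move=> w; have /andP[f0 f1] := f01 (X w); rewrite ger0_norm.
rewrite /Rintegral.
rewrite (flip_numerator mX mA mY0 mY1 mV mf A01 f01 iY0 iY1 unif indep cond).
by rewrite (flip_denominator mX mA mY0 mY1 mV mf A01 f01 unif indep).
Qed.
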